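(* Let $\mathcal G=(\mathcal V,\mathcal E,W)$ be a network, $h\in\mathbb{R}^{\mathcal V}$, and consider the SNC game with binary actions on $\mathcal G$ with external field $h$. If $\mathcal G$ is structurally balanced, then the set $\mathcal N$ of Nash equilibria is globally BR-reachable.
   Context: A network is a triple $\mathcal G=(\mathcal V,\mathcal E,W)$ where $\mathcal V$ is a finite nonempty set, $\mathcal E\subseteq\mathcal V\times\mathcal V$, and $W\in\mathbb{R}^{\mathcal V\times\mathcal V}$ has zero diagonal and satisfies $W_{ij}\neq0$ iff $(i,j)\in\mathcal E$ (weights may have either sign). It is structurally balanced if $\mathcal V$ can be written as a disjoint union $\mathcal V_1\cup\mathcal V_2$ with $W_{ij}\ge0$ whenever $i,j$ lie in the same part and $W_{ij}\le0$ whenever they lie in different parts. The SNC game with binary actions on $\mathcal G$ with external field $h\in\mathbb{R}^{\mathcal V}$ has player set $\mathcal V$, action set $\{-1,+1\}$ for each player, strategy profiles $\mathcal X=\{\pm1\}^{\mathcal V}$, and utilities $u_i(x)=h_ix_i+x_i\sum_{j\in\mathcal V}W_{ij}x_j$. Best responses $\mathcal B_i(x_{-i})=\arg\max_{x_i\in\{\pm1\}}u_i(x_i,x_{-i})$; Nash equilibrium: $x^*_i\in\mathcal B_i(x^*_{-i})$ for all $i$. A BR-path of length $l\ge0$ from $x$ to $y$ is a sequence $x^{(0)}=x,\dots,x^{(l)}=y$ such that for each $k$ some player $i_k$ has $x^{(k)}_{-i_k}=x^{(k-1)}_{-i_k}$ and $x^{(k)}_{i_k}\in\mathcal B_{i_k}(x^{(k-1)}_{-i_k})\setminus\{x^{(k-1)}_{i_k}\}$.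 A set $\mathcal X^*\subseteq\mathcal X$ is globally BR-reachable if from every profile there is a BR-path to some element of $\mathcal X^*$. *)

From mathcomp Require Import all_boot all_order all_algebra.
Set Implicit Arguments. Unset Strict Implicit. Unset Printing Implicit Defensive.
Import Order.TTheory GRing.Theory Num.Theory.
Local Open Scope ring_scope.

(* A network on the finite nonempty player set V with real weights W.
   The edge set is E = {(i,j) | W i j != 0}, so it is determined by W. *)
Definition zero_diag (R : realFieldType) (V : finType) (W : V -> V -> R) : Prop :=
  forall i, W i i = 0.

(* Structural balance: V = V1 \cup V2 disjoint (encoded by V1 and its complement),
   W >= 0 within parts, W <= 0 across parts. *)
Definition structurally_balanced (R : realFieldType) (V : finType)
    (W : V -> V -> R) : Prop :=
  exists V1 : {set V},
    forall i j, if (i \in V1) == (j \in V1) then 0 <= W i j else W i j <= 0.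

Definition act (R : realFieldType) (b : bool) : R := if b then 1 else -1.

Definition profile (V : finType) := V -> bool.

Definition upd (V : finType) (x : profile V) (i : V) (b : bool) : profile V :=
  fun j => if j == i then b else x j.

Definition utility (R : realFieldType) (V : finType) (W : V -> V -> R) (h : V -> R)
    (i : V) (x : profile V) : R :=
  h i * act R (x i) + act R (x i) * \sum_(j : V) W i j * act R (x j).

Definition best_response (R : realFieldType) (V : finType) (W : V -> V -> R)
    (h : V -> R) (i : V) (x : profile V) (b : bool) : Prop :=
  forall b' : bool, utility W h i (upd x i b') <= utility W h i (upd x i b).

Definition nash (R : realFieldType) (V : finType) (W : V -> V -> R) (h : V -> R)
    (x : profile V) : Prop :=
  forall i, best_response W h i x (x i).

Definition br_step (R : realFieldType) (V : finType) (W : V -> V -> R) (h : V -> R)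
    (x y : profile V) : Prop :=
  exists i : V, (forall j, j != i -> y j = x j) /\
    best_response W h i x (y i) /\ y i <> x i.

(* BR-path x^(0) = x, ..., x^(l) = y given as the list [x^(1); ...; x^(l)]. *)
Fixpoint br_path (R : realFieldType) (V : finType) (W : V -> V -> R) (h : V -> R)
    (x : profile V) (s : list (profile V)) : Prop :=
  match s with
  | nil => True
  | cons z s' => br_step W h x z /\ br_path W h z s'
  end.

Definition globally_BR_reachable (R : realFieldType) (V : finType)
    (W : V -> V -> R) (h : V -> R) (X : profile V -> Prop) : Prop :=
  forall x : profile V, exists s : list (profile V),
    br_path W h x s /\ X (last x s).

(** Writing [s i = ±1] for the side of the partition containing [i], the
    gauge change [x i ↦ s i * x i] turns a structurally balanced game into a
    supermodular one: the gauged incentive [s i * (h i + Σ_j W i j x j)] of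
    player [i] to align with [s i] can only grow when another player aligns.
    From any profile, first let aligned players with a negative incentive
    misalign; this lowers the number of aligned players, so it stops at a
    profile where every aligned player is content.  Then let misaligned
    players with a positive incentive align; by supermodularity the aligned
    players stay content, the number of misaligned players drops, and the
    process ends at a Nash equilibrium. *)

From mathcomp Require Import all_boot all_order all_algebra.
From mathcomp Require Import lra.
Set Implicit Arguments. Unset Strict Implicit. Unset Printing Implicit Defensive.
Import Order.TTheory GRing.Theory Num.Theory.
Local Open Scope ring_scope.

Lemma act_negb (R : realFieldType) (b : bool) : act R (~~ b) = - act R b.
Proof. by case: b => /=; rewrite ?opprK. Qed.

Lemma act_eqb (R : realFieldType) (a b : bool) :
  act R (a == b) = act R a * act R b.
Proof. by case: a; case: b => /=; lra. Qed.

Section Game.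

Variables (R : realFieldType) (V : finType) (W : V -> V -> R) (h : V -> R).

Definition local_field (x : profile V) (i : V) : R :=
  h i + \sum_j W i j * act R (x j).

Lemma local_field_upd x k b i :
  local_field (upd x k b) i = local_field x i + W i k * (act R b - act R (x k)).
Proof.
rewrite /local_field (bigD1 k) //= [in RHS](bigD1 k) //= /upd eqxx.
rewrite (eq_bigr (fun j => W i j * act R (x j))) => [|j /negbTE -> //].
by rewrite mulrBr; lra.
Qed.

Lemma br_path_cat x s1 s2 :
  br_path W h x s1 -> br_path W h (last x s1) s2 -> br_path W h x (s1 ++ s2).
Proof. by elim: s1 x => [|z s IH] x //= [? ?] ?; split => //; apply: IH. Qed.

Lemma br_path_descent (I T : profile V -> Prop) (m : profile V -> nat) :
    (forall x, I x -> T x \/ exists2 y, br_step W h x y & I y /\ (m y < m x)%N) ->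
  forall x, I x -> exists s, br_path W h x s /\ T (last x s).
Proof.
move=> step x; elim: {x}(m x).+1 {-2}x (ltnSn (m x)) => // n IH x lt_mx Ix.
have [Tx | [y xy [Iy lt_my]]] := step x Ix; first by exists nil.
have [s [ys Ts]] := IH y (leq_trans lt_my lt_mx) Iy.
by exists (y :: s).
Qed.

Hypothesis zero_diagW : zero_diag W.

Lemma utility_upd x i b : utility W h i (upd x i b) = act R b * local_field x i.
Proof.
have := local_field_upd x i b i; rewrite zero_diagW mul0r addr0 => <-.
by rewrite /utility /local_field /upd eqxx; lra.
Qed.

Lemma best_responseP x i b :
  best_response W h i x b <-> 0 <= act R b * local_field x i.
Proof.
split=> [br | ge0 b']; first by have := br (~~ b); rewrite !utility_upd act_negb; lra.
rewrite !utility_upd; have [-> | /eqP] := eqVneq b' b; first lra.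
by case: b b' ge0 => [] [] //=; lra.
Qed.

Lemma flip_br_step x i :
  act R (x i) * local_field x i < 0 -> br_step W h x (upd x i (~~ x i)).
Proof.
move=> lt0; exists i; rewrite /upd eqxx; split=> [j /negbTE -> //|].
by split; [apply/best_responseP; rewrite act_negb; lra | case: (x i)].
Qed.

End Game.

Section Balanced.

Variables (R : realFieldType) (V : finType) (W : V -> V -> R) (h : V -> R).
Variable V1 : {set V}.
Hypothesis zero_diagW : zero_diag W.

Definition aligned (x : profile V) (i : V) : bool := x i == (i \in V1).

Definition gauged_field (x : profile V) (i : V) : R :=
  act R (i \in V1) * local_field W h x i.

Definition aligned_content (x : profile V) : Prop :=
  forall i, aligned x i -> 0 <= gauged_field x i.

Lemma act_mul_local_field x i :
  act R (x i) * local_field W h x i = act R (aligned x i) * gauged_field x i.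
Proof.
by rewrite /gauged_field mulrA -act_eqb /aligned; case: (x i); case: (i \in V1).
Qed.

Lemma aligned_flip x i j :
  aligned (upd x i (~~ x i)) j = if j == i then ~~ aligned x i else aligned x j.
Proof.
by rewrite /aligned /upd; case: (j =P i) => [->|//]; case: (x i); case: (i \in V1).
Qed.

Lemma card_aligned_flip x i a :
  aligned x i = a ->
  (#|[set j | aligned (upd x i (~~ x i)) j == a]| < #|[set j | aligned x j == a]|)%N.
Proof.
move=> xia; apply/proper_card/properP; split.
  apply/subsetP => j; rewrite !inE aligned_flip.
  by case: (j =P i) => [->|//]; rewrite xia; case: a {xia}.
exists i; first by rewrite inE xia.
by rewrite inE aligned_flip eqxx xia; case: a {xia}.
Qed.

Lemma reach_aligned_content x :
  exists s, br_path W h x s /\ aligned_content (last x s).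
Proof.
apply: (@br_path_descent _ _ _ _ (fun _ => True) _
  (fun y => #|[set j | aligned y j == true]|)) => // {}x _.
case: (pickP (fun i => aligned x i && (gauged_field x i < 0))) => [i | none].
  case/andP=> xi lt0; right; exists (upd x i (~~ x i)).
    by apply: flip_br_step; rewrite // act_mul_local_field xi /=; lra.
  by split=> //; apply: card_aligned_flip.
by left=> i xi; have := none i; rewrite xi /= => /negbT; rewrite -leNgt.
Qed.

Hypothesis balancedW :
  forall i j, if (i \in V1) == (j \in V1) then 0 <= W i j else W i j <= 0.

(* Supermodularity of the gauged game: aligning [k] moves [x k] by
   [2 * act (k \in V1)], and [act (i \in V1) * act (k \in V1) * W i k >= 0]. *)
Lemma gauged_field_align x k i :
  ~~ aligned x k -> gauged_field x i <= gauged_field (upd x k (~~ x k)) i.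
Proof.
rewrite /gauged_field local_field_upd /aligned act_negb.
have := balancedW i k; case: (x k); case: (k \in V1); case: (i \in V1) => //= W_ik _.
all: nra.
Qed.

Lemma aligned_content_reach_nash x :
  aligned_content x -> exists s, br_path W h x s /\ nash W h (last x s).
Proof.
apply: (@br_path_descent _ _ _ _ aligned_content _
  (fun y => #|[set j | aligned y j == false]|)) => {}x content.
case: (pickP (fun i => ~~ aligned x i && (0 < gauged_field x i))) => [i | none].
  case/andP=> /negbTE xi gt0; right; exists (upd x i (~~ x i)).
    by apply: flip_br_step; rewrite // act_mul_local_field xi /=; lra.
  split; last exact: card_aligned_flip.
  move=> j; have := gauged_field_align j (negbT xi); rewrite aligned_flip.
  by case: (j =P i) => [-> le _ | _ le /content]; lra.
left=> i; apply/best_responseP => //; rewrite act_mul_local_field.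
case xi: (aligned x i); first by have := content i xi; rewrite /=; lra.
by have := none i; rewrite xi /= => /negbT; rewrite -leNgt /=; lra.
Qed.

End Balanced.

Theorem proposition3 (R : realFieldType) (V : finType) (v0 : V)
    (W : V -> V -> R) (h : V -> R) :
  zero_diag W -> structurally_balanced W ->
  globally_BR_reachable W h (nash W h).
Proof.
move=> zero_diagW [V1 balancedW] x.
have [s1 [path1 content]] := reach_aligned_content h V1 zero_diagW x.
have [s2 [path2 nash2]] := aligned_content_reach_nash zero_diagW balancedW content.
exists (s1 ++ s2); split; first exact: br_path_cat.
by rewrite last_cat.
Qed.
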